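(* Let $\mathcal{G}$ be a connected hypergraph with spectral radius $\rho$ and principal eigenvector $X=(x_v)$, let $k\ge2$, and let $e=\{u,v_1,v_2,\dots,v_{k-1}\}$ be a pendant edge of $\mathcal{G}$ with $\deg_{\mathcal{G}}(u)\geq 2$. Then $$x_{v_1}=x_{v_2}=\cdots=x_{v_{k-1}}=\frac{x_u}{(k-1)\rho-(k-2)}<x_u.$$
   Context: A hypergraph has a finite vertex set and distinct edges (subsets with at least two vertices); $\deg_{\mathcal{G}}(v)$ is the number of edges containing $v$; a pendant edge is an edge in which at most one vertex has degree greater than one. The adjacency matrix has $(\mathcal{A}_{\mathcal{G}})_{ij}=\sum_{e\ni i,j}\frac{1}{|e|-1}$ for $i\ne j$ and $0$ on the diagonal; $\rho$ is its spectral radius. For connected $\mathcal{G}$ the principal eigenvector is the unique positive eigenvector of $\mathcal{A}_{\mathcal{G}}$ for $\rho$ with unit Euclidean norm. *)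

From HB Require Import structures.
From mathcomp Require Import all_boot all_order all_algebra.
From mathcomp Require Import reals.
From mathcomp Require Import complex.
Set Implicit Arguments. Unset Strict Implicit. Unset Printing Implicit Defensive.
Import Order.TTheory GRing.Theory Num.Theory.
Local Open Scope ring_scope.

(* A hypergraph on the finite vertex type T is a set E of edges (distinct by
   construction, since E is a set), each edge having at least two vertices. *)
Definition is_hypergraph (T : finType) (E : {set {set T}}) : Prop :=
  forall e, e \in E -> (2 <= #|e|)%N.

Definition hdeg (T : finType) (E : {set {set T}}) (v : T) : nat :=
  #|[set e in E | v \in e]|.

Definition pendant_edge (T : finType) (E : {set {set T}}) (e : {set T}) : Prop :=
  e \in E /\ (#|[set w in e | (1 < hdeg E w)%N]| <= 1)%N.

Definition hadj (T : finType) (E : {set {set T}}) : rel T :=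
  fun x y => [exists e in E, (x \in e) && (y \in e)].

Definition hconnected (T : finType) (E : {set {set T}}) : Prop :=
  forall x y : T, connect (hadj E) x y.

Definition hadjw (R : realType) (T : finType) (E : {set {set T}}) (i j : T) : R :=
  if i == j then 0
  else \sum_(e in E | (i \in e) && (j \in e)) ((#|e|%:R - 1)^-1).

Definition hadjmx (R : realType) (T : finType) (E : {set {set T}})
  : 'M[R]_#|T| :=
  \matrix_(i, j) hadjw R E (enum_val i) (enum_val j).

Definition spectral_radius (R : realType) (n : nat) (A : 'M[R]_n) (rho : R) : Prop :=
  let AC := map_mx (fun x : R => (x%:C)%C) A in
  (exists z : R[i], eigenvalue AC z /\ `|z| = (rho%:C)%C) /\
  (forall z : R[i], eigenvalue AC z -> `|z| <= (rho%:C)%C).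

Definition principal_eigvec (R : realType) (n : nat) (A : 'M[R]_n) (rho : R)
  (X : 'cV[R]_n) : Prop :=
  (forall i, 0 < X i 0) /\ A *m X = rho *: X /\ \sum_i (X i 0) ^+ 2 = 1.

(* The eigenvalue equation at a pendant vertex v of e involves only e:
   ((k-1) rho + 1) x_v = sum_(w in e) x_w, so all pendant vertices of e carry
   the same weight and solving gives ((k-1) rho - (k-2)) x_v = x_u.  Summing the
   eigenvalue equation over all vertices gives rho sum_w x_w = sum_w deg(w) x_w;
   as every degree is positive and deg u >= 2, this forces rho > 1, whence the
   denominator exceeds 1 and x_v < x_u. *)
From HB Require Import structures.
From mathcomp Require Import all_boot all_order all_algebra.
From mathcomp Require Import reals.
From mathcomp Require Import complex.
From mathcomp Require Import ring lra.
Set Implicit Arguments.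
Unset Strict Implicit.
Unset Printing Implicit Defensive.
Import Order.TTheory GRing.Theory Num.Theory.
Local Open Scope ring_scope.

Section HypergraphAdjacency.

Variables (R : realType) (T : finType) (E : {set {set T}}).

Lemma hadjwC i j : hadjw R E i j = hadjw R E j i.
Proof.
rewrite /hadjw eq_sym; case: (j == i) => //.
by apply: eq_bigl => f; rewrite [(i \in f) && _]andbC.
Qed.

Lemma hadjw_sum_edges (x : T -> R) w :
  \sum_j hadjw R E w j * x j =
  \sum_(f in E | w \in f) (#|f|%:R - 1)^-1 * \sum_(j in f :\ w) x j.
Proof.
transitivity (\sum_j \sum_(f in E | (w \in f) && (j \in f))
   (if w == j then 0 else (#|f|%:R - 1)^-1 * x j)).
  apply: eq_bigr => j _; rewrite /hadjw.
  by case: eqP => _; [rewrite mul0r big1 | rewrite mulr_suml].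
rewrite (exchange_big_dep (fun f => (f \in E) && (w \in f))) /=; last first.
  by move=> j f _ /andP[-> /andP[->]].
apply: eq_bigr => f /andP[fE wf].
rewrite mulr_sumr big_mkcond [RHS]big_mkcond /=.
apply: eq_bigr => j _; rewrite fE wf in_setD1 [w == j]eq_sym /=.
by case: (j == w); case: (j \in f).
Qed.

Lemma hadjw_row_sum (j : T) :
  is_hypergraph E -> \sum_w hadjw R E j w = (hdeg E j)%:R.
Proof.
move=> HE; rewrite (eq_bigr (fun w => hadjw R E j w * 1)); last first.
  by move=> w; rewrite mulr1.
rewrite (hadjw_sum_edges (fun=> 1)) /hdeg -sum1_card natr_sum.
rewrite big_mkcond [RHS]big_mkcond /=; apply: eq_bigr => f _; rewrite inE.
case: ifP => // /andP[fE jf].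
have f_gt1 := HE f fE.
have card_fj : #|f :\ j| = (#|f| - 1)%N.
  by rewrite (cardsD1 j f) jf add1n subSS subn0.
rewrite sumr_const card_fj natrB ?(ltnW f_gt1) // mulVf //.
by rewrite subr_eq0 pnatr_eq1 gtn_eqF.
Qed.

Lemma hadjmx_eigen_vertex (rho : R) (X : 'cV[R]_#|T|) :
  hadjmx R E *m X = rho *: X ->
  forall w, rho * X (enum_rank w) 0 = \sum_j hadjw R E w j * X (enum_rank j) 0.
Proof.
move=> /matrixP eqAX w; have := eqAX (enum_rank w) 0; rewrite !mxE => <-.
rewrite (reindex (@enum_rank T)) /=; last exact/onW_bij/enum_rank_bij.
by apply: eq_bigr => j _; rewrite mxE !enum_rankK.
Qed.

Lemma pendant_vertex_edges (e : {set T}) (u v : T) :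
  pendant_edge E e -> u \in e -> (2 <= hdeg E u)%N ->
  v \in e -> v != u -> [set f in E | v \in f] = [set e].
Proof.
move=> [eE pend] ue du ve vu.
have deg_v : (hdeg E v <= 1)%N.
  rewrite leqNgt; apply/negP => dv.
  have : (#|[set u; v]| <= #|[set w in e | (1 < hdeg E w)%N]|)%N.
    apply: subset_leq_card; apply/subsetP => w; rewrite !inE.
    by case/orP => /eqP ->; rewrite ?ue ?ve /= ?dv // (leq_trans _ du).
  by rewrite cards2 eq_sym vu => /leq_trans /(_ pend).
have e_v : e \in [set f in E | v \in f] by rewrite inE eE ve.
have : #|[set f in E | v \in f]| == 1%N.
  by rewrite eqn_leq deg_v card_gt0; apply/set0Pn; exists e.
by case/cards1P => f Ef; move: e_v; rewrite Ef inE => /eqP <-.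
Qed.

Section Eigenvector.

Hypothesis HE : is_hypergraph E.
Variables (rho : R) (x : T -> R).
Hypothesis x_gt0 : forall w, 0 < x w.
Hypothesis eigen : forall w, rho * x w = \sum_j hadjw R E w j * x j.

Lemma eigen_edges w :
  rho * x w = \sum_(f in E | w \in f) (#|f|%:R - 1)^-1 * \sum_(j in f :\ w) x j.
Proof. by rewrite eigen hadjw_sum_edges. Qed.

Lemma eigen_degree_sum : rho * \sum_w x w = \sum_w (hdeg E w)%:R * x w.
Proof.
rewrite mulr_sumr (eq_bigr _ (fun w _ => eigen w)) exchange_big /=.
apply: eq_bigr => j _; rewrite -(hadjw_row_sum j HE) mulr_suml.
by apply: eq_bigr => w _; rewrite hadjwC.
Qed.

Lemma edge_term_gt0 f w : f \in E -> w \in f ->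
  0 < (#|f|%:R - 1)^-1 * \sum_(j in f :\ w) x j.
Proof.
move=> fE wf; have := HE fE; rewrite (cardsD1 w f) wf add1n ltnS => f_gt1.
have /set0Pn[j jf] : f :\ w != set0 by rewrite -card_gt0.
rewrite mulr_gt0 ?invr_gt0 ?subr_gt0 ?ltr1n ?(cardsD1 w f) ?wf //.
rewrite (big_setD1 j jf) /= ltr_pwDl ?x_gt0 ?sumr_ge0 // => i _.
exact: ltW.
Qed.

Lemma eigval_gt0 w : (0 < hdeg E w)%N -> 0 < rho.
Proof.
move=> /card_gt0P[f]; rewrite inE => /andP[fE wf].
suff : 0 < rho * x w by rewrite pmulr_lgt0.
rewrite eigen_edges (bigD1 f) ?fE ?wf //= ltr_pwDl ?edge_term_gt0 ?sumr_ge0 //.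
by move=> g /andP[/andP[gE wg] _]; apply/ltW/edge_term_gt0.
Qed.

Lemma hdeg_gt0 j : 0 < rho -> (0 < hdeg E j)%N.
Proof.
move=> rho_gt0; rewrite lt0n; apply/negP => /eqP/cards0_eq no_edge.
have := eigen_edges j; rewrite big_pred0 => [/eqP|f]; last first.
  by have := in_set0 f; rewrite -no_edge inE.
by rewrite mulf_eq0 gt_eqF // (gt_eqF (x_gt0 j)).
Qed.

Lemma eigval_gt1 u : (2 <= hdeg E u)%N -> 1 < rho.
Proof.
move=> du; have rho_gt0 := eigval_gt0 (ltnW du).
have sum_gt0 : 0 < \sum_w x w.
  by rewrite (bigD1 u) //= ltr_pwDl ?sumr_ge0 // => w _; exact: ltW.
have : \sum_w x w + x u <= \sum_w (hdeg E w)%:R * x w.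
  rewrite (bigD1 u) //= [leRHS](bigD1 u) //=.
  have le_rest : \sum_(w | w != u) x w <= \sum_(w | w != u) (hdeg E w)%:R * x w.
    apply: ler_sum => w _; rewrite ler_peMl ?ler1n ?hdeg_gt0 //; exact: ltW.
  have le_u : 2%:R * x u <= (hdeg E u)%:R * x u.
    by apply: ler_wpM2r; rewrite ?ler_nat // ltW.
  have := x_gt0 u; lra.
rewrite -eigen_degree_sum; have := x_gt0 u; nra.
Qed.

Lemma eigvec_single_edge v e : [set f in E | v \in f] = [set e] ->
  x v * ((#|e|%:R - 1) * rho + 1) = \sum_(j in e) x j.
Proof.
move=> Ev; have : e \in [set f in E | v \in f] by rewrite Ev set11.
rewrite inE => /andP[eE ve].
have c_neq0 : #|e|%:R - 1 != 0 :> R by rewrite subr_eq0 pnatr_eq1 gtn_eqF ?HE.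
have := eigen_edges v.
rewrite (eq_bigl (fun f => f \in [set f in E | v \in f])); last first.
  by move=> f; rewrite inE.
rewrite Ev big_set1 (big_setD1 v ve) /= => rho_xv.
by rewrite -(mulVKf c_neq0 (\sum_(j in e :\ v) x j)) -rho_xv; ring.
Qed.

Lemma eigvec_pendant e u v :
  pendant_edge E e -> u \in e -> (2 <= hdeg E u)%N -> v \in e -> v != u ->
  x v * ((#|e|%:R - 1) * rho - (#|e|%:R - 2)) = x u.
Proof.
move=> pend ue du ve vu.
have eq_v w : w \in e :\ u ->
    x w * ((#|e|%:R - 1) * rho + 1) = \sum_(j in e) x j.
  rewrite in_setD1 => /andP[wu we].
  exact: eigvec_single_edge (pendant_vertex_edges pend ue du we wu).
have veu : v \in e :\ u by rewrite in_setD1 vu ve.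
have S_gt0 : 0 < \sum_(j in e) x j.
  by rewrite (big_setD1 u ue) ltr_pwDl ?sumr_ge0 // => j _; exact: ltW.
have d_neq0 : (#|e|%:R - 1) * rho + 1 != 0.
  by apply: contraTneq S_gt0 => d0; rewrite -(eq_v v veu) d0 mulr0 ltxx.
have x_const w : w \in e :\ u -> x w = x v.
  by move=> weu; apply: (mulIf d_neq0); rewrite !eq_v.
have sum_e : \sum_(j in e) x j = x u + (#|e|%:R - 1) * x v.
  rewrite (big_setD1 u ue) /= (eq_bigr _ x_const) sumr_const; congr (_ + _).
  by rewrite (cardsD1 u e) ue add1n -natr1 addrK mulr_natl.
have := eq_v v veu; rewrite sum_e => eq_xv.
by apply: (addIr ((#|e|%:R - 1) * x v)); rewrite -eq_xv; ring.
Qed.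

End Eigenvector.

End HypergraphAdjacency.

Theorem lemma3p7 (R : realType) (T : finType) (E : {set {set T}})
  (rho : R) (X : 'cV[R]_#|T|) (k : nat) (e : {set T}) (u : T) :
  is_hypergraph E -> hconnected E ->
  spectral_radius (hadjmx R E) rho ->
  principal_eigvec (hadjmx R E) rho X ->
  (2 <= k)%N -> #|e| = k -> u \in e ->
  pendant_edge E e -> (2 <= hdeg E u)%N ->
  forall v : T, v \in e -> v != u ->
    X (enum_rank v) 0 = X (enum_rank u) 0 / ((k%:R - 1) * rho - (k%:R - 2)) /\
    X (enum_rank v) 0 < X (enum_rank u) 0.
Proof.
move=> HE _ _ [X_gt0 [eigX _]] k_ge2 card_e ue pend du v ve vu.
pose x w := X (enum_rank w) 0.
have x_gt0 w : 0 < x w by exact: X_gt0.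
have eigen := hadjmx_eigen_vertex eigX.
have rho_gt1 : 1 < rho := eigval_gt1 HE x_gt0 eigen du.
have := eigvec_pendant HE x_gt0 eigen pend ue du ve vu.
rewrite card_e -/(x v) -/(x u) => xu_eq.
have k_gt1 : 1 < k%:R :> R by rewrite ltr1n.
have denom_gt1 : 1 < (k%:R - 1) * rho - (k%:R - 2) by nra.
split; first by rewrite -xu_eq mulfK // gt_eqF // (lt_trans ltr01 denom_gt1).
by rewrite -xu_eq; have := x_gt0 v; nra.
Qed.
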